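(* Let $(M,J,c)$ be a conformal almost Hermitian structure of dimension $n\ge4$ and let $\nabla$ be an affine connection which is almost complex ($\nabla J=0$) and conformal (for each $g\in c$, $\nabla g=2B'\otimes g$ for some 1-form $B'$). Then $\nabla=\nabla^{gc}$ if and only if $V(\operatorname{Tor}\nabla)=0$.
   Context: Conformal almost Hermitian structure: $J$ with $J^2=-\mathrm{id}$, $c$ a conformal class of Riemannian metrics with $J$ orthogonal. For $g\in c$ with Levi-Civita $\nabla^{LC}$, $B_a:=\frac1{n-2}J^c{}_b\nabla^{LC}_cJ^b{}_a$ and $\nabla^c_aY^b:=\nabla^{LC}_aY^b-B_aY^b+B^bY_a-B_cY^c\delta^b_a$ (independent of $g\in c$). $G^c(X,Y):=-\frac12J(\nabla^c_YJ)X$ and $\nabla^{gc}_XY:=\nabla^c_XY+G^c(Y,X)$. For a $(1,2)$ tensor $T^a{}_{bc}$ skew in $b,c$ (torsion $T(X,Y)=D_XY-D_YX-[X,Y]=T^a{}_{bc}X^bY^c$), using any $g\in c$ to raise/lower indices define $A_d:=\frac1{n-2}\big(T^a{}_{ad}+\frac12J^a{}_cJ^b{}_d(T_a{}^c{}_b-T_{ba}{}^c-T^c{}_{ba})\big)$, $G^T_{abc}:=A_ag_{bc}-A_bg_{ac}-A_cg_{ab}+\frac12(T_{cab}-T_{abc}-T_{bca})$, regarded as a $(1,2)$ tensor $G^T(Y,X)=(G^T)^a{}_{bc}Y^bX^c$ (these are independent of $g\in c$), and $V(T)(Y,X):=JG^T(Y,X)+G^T(JY,X)$. *)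

(* Local coordinate formalization: the manifold is replaced by an open set U
   of R^n = 'rV[R]_n.  All tensors are given by
   their components in the coordinate frame (d/dx_0, ..., d/dx_{n-1}). *)
From HB Require Import structures.
From mathcomp Require Import all_boot all_order all_algebra.
From mathcomp Require Import all_classical all_reals all_analysis.
Set Implicit Arguments. Unset Strict Implicit. Unset Printing Implicit Defensive.
Import Order.TTheory GRing.Theory Num.Theory.
Import numFieldNormedType.Exports.
Local Open Scope ring_scope.

Section Defs.
Variables (R : realType) (n : nat).

Definition point := 'rV[R]_n.

(* Component fields of (1,2)-tensors / Christoffel symbols:
   Chr x a b c = Gamma^a_{bc}(x), with  D_{d_b} d_c = Gamma^a_{bc} d_a,
   i.e. (D_X Y)^a = X^b d_b Y^a + Gamma^a_{bc} X^b Y^c.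
   For a (1,2)-tensor T, T x a b c = T^a_{bc}(x). *)
Definition Chr := point -> 'I_n -> 'I_n -> 'I_n -> R.

Definition pd (f : point -> R) (k : 'I_n) (x : point) : R :=
  derive f x (delta_mx (0 : 'I_1) k).

(* J x a b = J^a_b(x) ; g x a b = g_{ab}(x) ; ginv = g^{ab} *)
Definition ginv (g : point -> 'M[R]_n) (x : point) : 'M[R]_n := invmx (g x).

Definition LC (g : point -> 'M[R]_n) : Chr := fun x a b c =>
  2^-1 * \sum_(d < n) ginv g x a d *
    (pd (fun y => g y d c) b x + pd (fun y => g y d b) c x
     - pd (fun y => g y b c) d x).

Definition covJ (G : Chr) (J : point -> 'M[R]_n) (x : point) (c a b : 'I_n) : R :=
  pd (fun y => J y a b) c x + \sum_(d < n) G x a c d * J x d b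
  - \sum_(d < n) G x d c b * J x a d.

Definition covg (G : Chr) (g : point -> 'M[R]_n) (x : point) (c a b : 'I_n) : R :=
  pd (fun y => g y a b) c x - \sum_(d < n) G x d c a * g x d b
  - \sum_(d < n) G x d c b * g x a d.

Definition Bform (g J : point -> 'M[R]_n) (x : point) (a : 'I_n) : R :=
  (n%:R - 2)^-1 * \sum_(b < n) \sum_(c < n) J x c b * covJ (LC g) J x c b a.

Definition Bup (g J : point -> 'M[R]_n) (x : point) (b : 'I_n) : R :=
  \sum_(e < n) ginv g x b e * Bform g J x e.

(* nabla^c_a Y^b = nabla^LC_a Y^b - B_a Y^b + B^b Y_a - B_d Y^d delta^b_a *)
Definition Gamma_c (g J : point -> 'M[R]_n) : Chr := fun x b a d =>
  LC g x b a d - Bform g J x a * (b == d)%:R + Bup g J x b * g x a d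
  - Bform g J x d * (b == a)%:R.

(* G^c(X,Y) = -1/2 J (nabla^c_Y J) X ; Gc x a b e = coefficient of X^b Y^e *)
Definition Gc (g J : point -> 'M[R]_n) : Chr := fun x a b e =>
  - 2^-1 * \sum_(f < n) J x a f * covJ (Gamma_c g J) J x e f b.

(* nabla^gc_X Y = nabla^c_X Y + G^c(Y,X) *)
Definition Gamma_gc (g J : point -> 'M[R]_n) : Chr := fun x a e b =>
  Gamma_c g J x a e b + Gc g J x a b e.

Definition torsion (G : Chr) : Chr := fun x a b c => G x a b c - G x a c b.

Definition Tlow (g : point -> 'M[R]_n) (T : Chr) (x : point) (a b c : 'I_n) : R :=
  \sum_(e < n) g x a e * T x e b c.

Definition Aform (g J : point -> 'M[R]_n) (T : Chr) (x : point) (d : 'I_n) : R :=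
  (n%:R - 2)^-1 *
  (\sum_(a < n) T x a a d +
   2^-1 * \sum_(a < n) \sum_(b < n) \sum_(c < n) J x a c * J x b d *
     ( \sum_(e < n) \sum_(f < n) g x a e * ginv g x c f * T x e f b
     - \sum_(e < n) \sum_(f < n) g x b e * T x e a f * ginv g x f c
     - T x c b a)).

Definition GTlow (g J : point -> 'M[R]_n) (T : Chr) (x : point) (a b c : 'I_n) : R :=
  Aform g J T x a * g x b c - Aform g J T x b * g x a c - Aform g J T x c * g x a b
  + 2^-1 * (Tlow g T x c a b - Tlow g T x a b c - Tlow g T x b c a).

(* (G^T)^a_{bc} = g^{ae} G^T_{ebc};  G^T(Y,X)^a = (G^T)^a_{bc} Y^b X^c *)
Definition GT (g J : point -> 'M[R]_n) (T : Chr) : Chr := fun x a b c =>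
  \sum_(e < n) ginv g x a e * GTlow g J T x e b c.

(* V(T)(Y,X) = J G^T(Y,X) + G^T(JY,X); components V^a_{bc} (coeff of Y^b X^c) *)
Definition VT (g J : point -> 'M[R]_n) (T : Chr) : Chr := fun x a b c =>
  \sum_(e < n) J x a e * GT g J T x e b c + \sum_(e < n) GT g J T x a e c * J x e b.

End Defs.

From Pilot Require Import Defs.
From mathcomp Require Import all_boot all_order all_algebra.
From mathcomp Require Import all_classical all_reals all_analysis.
From mathcomp Require Import ring.
Import Order.TTheory GRing.Theory Num.Theory.
Import numFieldNormedType.Exports.
Set Implicit Arguments. Unset Strict Implicit. Unset Printing Implicit Defensive.
Local Open Scope ring_scope.

(** Put S := Gam - Gamma_c, the difference from the connection nabla^c.
   Both connections are conformal, so every S_c lies in the conformal algebra co(g);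
   Gamma_c is torsion free, so Tor Gam = Tor S; and since Gam J = 0 while the
   J-trace of Gamma_c J vanishes (this is what the choice of B achieves), the J-trace
   of the commutators [S_c, J] vanishes.  For such tensors the torsion determines S:
   G^(Tor S)(Y, X) = S_X Y, the term A absorbing the trace part of S (whence n <> 2).
   Finally Gam J = 0 rewrites [S, J] as Gamma_c J, which is exactly what G^c adds, so
   V(Tor Gam) = J S + S J = 2 J (Gam - Gamma_gc), and J is invertible. *)

Section SumDelta.
Variables (R : pzSemiRingType) (I : finType) (F : I -> R) (i : I).

Lemma sum_mul_delta : \sum_j F j * (j == i)%:R = F i.
Proof.
by rewrite (bigD1 i) //= eqxx mulr1 big1 ?addr0 // => j /negbTE ->; rewrite mulr0.
Qed.

Lemma sum_mul_delta_sym : \sum_j F j * (i == j)%:R = F i.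
Proof. by under eq_bigr do rewrite eq_sym; rewrite sum_mul_delta. Qed.

Lemma sum_delta_mul : \sum_j (j == i)%:R * F j = F i.
Proof.
by rewrite (bigD1 i) //= eqxx mul1r big1 ?addr0 // => j /negbTE ->; rewrite mul0r.
Qed.

Lemma sum_delta_mul_sym : \sum_j (i == j)%:R * F j = F i.
Proof. by under eq_bigr do rewrite eq_sym; rewrite sum_delta_mul. Qed.

Lemma sum_scale_delta (c : R) : \sum_j c * (j == i)%:R * F j = c * F i.
Proof. by under eq_bigr do rewrite -mulrA; rewrite -big_distrr sum_delta_mul. Qed.

Lemma sum_scale_delta_sym (c : R) : \sum_j c * (i == j)%:R * F j = c * F i.
Proof. by under eq_bigr do rewrite eq_sym; rewrite sum_scale_delta. Qed.

End SumDelta.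

Lemma exchange_big3 (R : nmodType) (I J K : finType) (F : I -> J -> K -> R) :
  \sum_i \sum_j \sum_k F i j k = \sum_j \sum_k \sum_i F i j k.
Proof. by rewrite [LHS]exchange_big; apply: eq_bigr => j _; rewrite [LHS]exchange_big. Qed.

Lemma exchange_big4 (R : nmodType) (I J K L : finType) (F : I -> J -> K -> L -> R) :
  \sum_i \sum_j \sum_k \sum_l F i j k l = \sum_j \sum_k \sum_l \sum_i F i j k l.
Proof. by rewrite [LHS]exchange_big; apply: eq_bigr => j _; rewrite [LHS]exchange_big3. Qed.

Lemma natr_sub2_neq0 (R : numFieldType) (n : nat) : n != 2%N -> (n%:R - 2 : R) != 0.
Proof. by rewrite subr_eq0 (eqr_nat R n 2). Qed.

Lemma sym_mxE (T : Type) (n : nat) (A : 'M[T]_n) : A^T = A -> forall i j, A i j = A j i.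
Proof. by move=> AT i j; rewrite -{1}AT mxE. Qed.

Section AlmostHermitianMatrix.
Variables (R : numFieldType) (n : nat) (G J : 'M[R]_n).
Hypotheses (J2 : J *m J = - 1%:M) (Gsym : G^T = G) (Gunit : G \in unitmx).
Hypothesis JGJ : J^T *m G *m J = G.

Lemma trmxJ_mul : J^T *m G = - (G *m J).
Proof.
have JV : J *m (- J) = 1%:M by rewrite mulmxN J2 opprK.
by rewrite -[LHS]mulmx1 -JV mulmxA JGJ mulmxN.
Qed.

Lemma conj_invmx : G *m J *m invmx G = - J^T.
Proof.
have : J^T *m G *m invmx G = J^T by rewrite -mulmxA mulmxV // mulmx1.
by rewrite trmxJ_mul mulNmx => <-; rewrite opprK.
Qed.

Lemma skew_mul_invmx : (J *m invmx G)^T = - (J *m invmx G).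
Proof.
rewrite trmx_mul trmx_inv Gsym -[J^T]opprK -conj_invmx.
by rewrite mulmxN !mulmxA mulVmx // mul1mx.
Qed.

Lemma mxtrace_cplx : \tr J = 0.
Proof.
have JE : J = invmx G *m (G *m J) by rewrite mulmxA mulVmx // mul1mx.
have skewGJ : (G *m J)^T = - (G *m J) by rewrite trmx_mul Gsym trmxJ_mul.
have trN : \tr J = - \tr J.
  by rewrite {1}JE -mxtrace_tr trmx_mul skewGJ trmx_inv Gsym mulNmx linearN /=
    mxtrace_mulC -JE.
have : 2 * \tr J = 0 by rewrite mulr_natl mulr2n {2}trN subrr.
by move/eqP; rewrite mulf_eq0 pnatr_eq0 => /eqP.
Qed.

Lemma invmx_symE a b : invmx G a b = invmx G b a.
Proof. by apply: sym_mxE; rewrite trmx_inv Gsym. Qed.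

Lemma mulVmxE a b : \sum_d invmx G a d * G d b = (a == b)%:R.
Proof. by have := congr1 (fun M : 'M[R]_n => M a b) (mulVmx Gunit); rewrite !mxE. Qed.

Lemma mulJJE a b : \sum_d J a d * J d b = - (a == b)%:R.
Proof. by have := congr1 (fun M : 'M[R]_n => M a b) J2; rewrite !mxE. Qed.

Lemma conj_invmxE e f : \sum_c (\sum_a G e a * J a c) * invmx G c f = - J f e.
Proof.
have := congr1 (fun M : 'M[R]_n => M e f) conj_invmx; rewrite !mxE => <-.
by apply: eq_bigr => c _; rewrite mxE.
Qed.

Lemma skew_mul_invmxE a b :
  \sum_d J a d * invmx G d b = - \sum_d J b d * invmx G d a.
Proof. by have := congr1 (fun M : 'M[R]_n => M b a) skew_mul_invmx; rewrite !mxE. Qed.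

Lemma JGJE b a : \sum_c \sum_e J c b * G c e * J e a = G b a.
Proof.
have := congr1 (fun M : 'M[R]_n => M b a) JGJ; rewrite !mxE => <-.
rewrite exchange_big; apply: eq_bigr => e _; rewrite mxE big_distrl.
by apply: eq_bigr => c _; rewrite mxE.
Qed.

End AlmostHermitianMatrix.

Section ConformalTensor.
Variables (R : realType) (n : nat) (g J : 'rV[R]_n -> 'M[R]_n) (x : 'rV[R]_n).
Hypotheses (J2 : J x *m J x = - 1%:M) (gsym : (g x)^T = g x) (gunit : g x \in unitmx).
Hypothesis JgJ : (J x)^T *m g x *m J x = g x.

Let g_sym := sym_mxE gsym.
Let ginv_sym := invmx_symE gsym.
Let ginv_g := mulVmxE gunit.
Let JJ := mulJJE J2.
Let g_J_ginv := conj_invmxE J2 gunit JgJ.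
Let J_ginv_skew := skew_mul_invmxE J2 gsym gunit JgJ.

Definition conformal_tensor (S : Chr R n) (beta : 'I_n -> R) :=
  forall c a b, \sum_d S x d c a * g x d b + \sum_d S x d c b * g x a d = 2 * beta c * g x a b.

(* J^c_b [S_c, J]^b_d; for S = Gam - Gamma_c it is the J-trace of Gam J - Gamma_c J. *)
Definition Jcomm_trace (S : Chr R n) d :=
  \sum_b \sum_c J x c b * (\sum_e S x b c e * J x e d - \sum_e S x e c d * J x b e).

Definition Jginv a f := \sum_c J x a c * ginv g x c f.

Variables (S : Chr R n) (beta : 'I_n -> R).
Hypothesis Sconf : conformal_tensor S beta.

Local Notation K := (Tlow g S x).
Local Notation T := (torsion S x).
Local Notation JSJ d := (\sum_b \sum_c \sum_e J x c b * S x b c e * J x e d).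

Lemma Tlow_conformal c a b : K b c a + K a c b = 2 * beta c * g x a b.
Proof.
rewrite -Sconf; congr (_ + _); apply: eq_bigr => d _; first by rewrite mulrC g_sym.
exact: mulrC.
Qed.

Lemma Tlow_swap h a f : K h a f = 2 * beta a * g x f h - K f a h.
Proof. by rewrite -(Tlow_conformal a f h) addrK. Qed.

Lemma raise_Tlow a b c : S x a b c = \sum_w ginv g x a w * K w b c.
Proof.
under eq_bigr do rewrite big_distrr /=.
rewrite exchange_big /=.
under eq_bigr do (under eq_bigr do rewrite mulrA; rewrite -big_distrl /= ginv_g).
by rewrite sum_delta_mul_sym.
Qed.

Lemma trace_conformal d : \sum_a S x a d a = n%:R * beta d.
Proof.
have sym : \sum_a \sum_w ginv g x a w * K w d a = \sum_a \sum_w ginv g x a w * K a d w.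
  by rewrite exchange_big; apply: eq_bigr => a _; apply: eq_bigr => w _; rewrite ginv_sym.
have twice : \sum_a \sum_w ginv g x a w * K w d a
           + \sum_a \sum_w ginv g x a w * K a d w = 2 * (n%:R * beta d).
  rewrite -big_split /=.
  under eq_bigr do rewrite -big_split /=.
  under eq_bigr do (under eq_bigr do rewrite -mulrDr Tlow_conformal).
  under eq_bigr do (under eq_bigr do rewrite [g x _ _]g_sym mulrCA;
                    rewrite -big_distrr /= ginv_g eqxx).
  by rewrite -big_distrr /= sumr_const card_ord; ring.
under eq_bigr do rewrite raise_Tlow.
apply: (@mulIf _ 2); first by rewrite pnatr_eq0.
by rewrite [RHS]mulrC -twice -sym mulr_natr mulr2n.
Qed.

Lemma contract_torsion_g d :
  \sum_a \sum_b \sum_c J x a c * J x b d * (\sum_e \sum_f g x a e * ginv g x c f * T e f b)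
  = \sum_a \sum_b \sum_c J x a c * J x b d * T c b a.
Proof.
have contract X : \sum_a \sum_c J x a c * (\sum_e \sum_f g x a e * ginv g x c f * X e f)
                = \sum_e \sum_f - J x f e * X e f.
  transitivity (\sum_a \sum_c \sum_e \sum_f J x a c * (g x a e * ginv g x c f * X e f)).
    by apply: eq_bigr => a _; apply: eq_bigr => c _; rewrite big_distrr;
      apply: eq_bigr => e _; rewrite big_distrr.
  transitivity (\sum_e \sum_f \sum_c \sum_a g x e a * J x a c * ginv g x c f * X e f);
    last first.
    apply: eq_bigr => e _; apply: eq_bigr => f _; rewrite -g_J_ginv big_distrl /=.
    by apply: eq_bigr => c _; rewrite !big_distrl.
  rewrite exchange_big4 exchange_big3.
  apply: eq_bigr => e _; apply: eq_bigr => f _; apply: eq_bigr => c _;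
    apply: eq_bigr => a _.
  by rewrite [g x a e]g_sym; ring.
rewrite exchange_big [RHS]exchange_big; apply: eq_bigr => b _.
transitivity (J x b d * \sum_a \sum_c J x a c *
     (\sum_e \sum_f g x a e * ginv g x c f * T e f b)).
  by rewrite big_distrr; apply: eq_bigr => a _; rewrite big_distrr;
    apply: eq_bigr => c _ /=; ring.
transitivity (J x b d * \sum_a \sum_c J x a c * T c b a); last first.
  by rewrite big_distrr; apply: eq_bigr => a _; rewrite big_distrr;
    apply: eq_bigr => c _ /=; ring.
rewrite contract exchange_big; congr (_ * _).
by apply: eq_bigr => f _; apply: eq_bigr => e _; rewrite /torsion; ring.
Qed.


Lemma contract_torsion_ginv d :
  \sum_a \sum_b \sum_c J x a c * J x b d * (\sum_e \sum_f g x b e * T e a f * ginv g x f c)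
  = 2 * \sum_a \sum_f Jginv a f * \sum_h J x h d * K h a f.
Proof.
set L := fun a f => \sum_h J x h d * K h a f.
have lowerT a f : \sum_e (\sum_b g x e b * J x b d) * T e a f = L a f - L f a.
  transitivity (\sum_h \sum_e J x h d * (g x h e * T e a f)); last first.
    rewrite /L -sumrB; apply: eq_bigr => h _; rewrite -big_distrr /= -mulrBr -sumrB.
    by congr (_ * _); apply: eq_bigr => e _; rewrite /torsion mulrBr.
  rewrite exchange_big /=; apply: eq_bigr => h _; rewrite big_distrl.
  by apply: eq_bigr => e _; rewrite [g x e h]g_sym /=; ring.
have skewL : \sum_a \sum_f Jginv a f * L f a = - \sum_a \sum_f Jginv a f * L a f.
  rewrite exchange_big -sumrN; apply: eq_bigr => a _; rewrite -sumrN.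
  by apply: eq_bigr => f _; rewrite /Jginv J_ginv_skew mulNr.
transitivity (\sum_a \sum_f Jginv a f * (L a f - L f a)); last first.
  under eq_bigr do (under eq_bigr do rewrite mulrBr; rewrite sumrB).
  by rewrite sumrB skewL opprK mulr2n mulrDl mul1r.
apply: eq_bigr => a _.
transitivity (\sum_e \sum_f Jginv a f * (\sum_b g x e b * J x b d) * T e a f).
  transitivity (\sum_e \sum_f \sum_c \sum_b
      J x a c * ginv g x c f * (g x e b * J x b d) * T e a f); last first.
    apply: eq_bigr => e _; apply: eq_bigr => f _; rewrite /Jginv !big_distrl /=.
    by apply: eq_bigr => c _; rewrite big_distrr big_distrl.
  transitivity (\sum_b \sum_c \sum_e \sum_f J x a c * J x b d * (g x b e * T e a f * ginv g x f c)).
    apply: eq_bigr => b _; apply: eq_bigr => c _; rewrite big_distrr /=.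
    by apply: eq_bigr => e _; rewrite big_distrr.
  rewrite exchange_big4 exchange_big4; apply: eq_bigr => e _; apply: eq_bigr => f _.
  rewrite exchange_big; apply: eq_bigr => c _; apply: eq_bigr => b _.
  by rewrite [g x b e]g_sym [ginv g x f c]ginv_sym; ring.
rewrite exchange_big; apply: eq_bigr => f _.
by rewrite -lowerT big_distrr; apply: eq_bigr => e _; rewrite /= mulrA.
Qed.

Lemma contract_Jginv_Tlow d :
  \sum_a \sum_f Jginv a f * \sum_h J x h d * K h a f = - (2 * beta d) - JSJ d.
Proof.
have Jginv_g a h : \sum_f Jginv a f * g x f h = J x a h.
  rewrite /Jginv; under eq_bigr do rewrite big_distrl /=.
  rewrite exchange_big /=.
  under eq_bigr do (under eq_bigr do rewrite -mulrA; rewrite -big_distrr /= ginv_g).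
  by rewrite sum_mul_delta.
have beta_part : \sum_a \sum_f Jginv a f * \sum_h J x h d * (2 * beta a * g x f h)
                 = - (2 * beta d).
  transitivity (\sum_a 2 * beta a * \sum_h (\sum_f Jginv a f * g x f h) * J x h d).
    apply: eq_bigr => a _.
    transitivity (\sum_f \sum_h 2 * beta a * (Jginv a f * g x f h * J x h d)).
      by apply: eq_bigr => f _; rewrite big_distrr; apply: eq_bigr => h _ /=; ring.
    rewrite exchange_big big_distrr; apply: eq_bigr => h _.
    by rewrite /= big_distrl big_distrr.
  under eq_bigr do (under eq_bigr do rewrite Jginv_g; rewrite JJ mulrN mulrC).
  by rewrite sumrN sum_delta_mul.
have JSJ_part : \sum_a \sum_f Jginv a f * \sum_h J x h d * K f a h = JSJ d.
  transitivity (\sum_c \sum_w \sum_b \sum_e J x c b * ginv g x b w * J x e d * K w c e).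
    apply: eq_bigr => c _; apply: eq_bigr => w _; rewrite /Jginv big_distrl.
    by apply: eq_bigr => b _; rewrite /= big_distrr; apply: eq_bigr => e _ /=; ring.
  transitivity (\sum_b \sum_c \sum_e \sum_w J x c b * ginv g x b w * K w c e * J x e d);
    last first.
    apply: eq_bigr => b _; apply: eq_bigr => c _; apply: eq_bigr => e _.
    by rewrite raise_Tlow big_distrr big_distrl; apply: eq_bigr => w _ /=; ring.
  rewrite [RHS]exchange_big4; apply: eq_bigr => c _; rewrite [RHS]exchange_big3.
  by apply: eq_bigr => w _; apply: eq_bigr => b _; apply: eq_bigr => e _; ring.
rewrite -beta_part -JSJ_part -sumrB; apply: eq_bigr => a _; rewrite -sumrB.
apply: eq_bigr => f _; rewrite -mulrBr -sumrB; congr (_ * _).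
by apply: eq_bigr => h _; rewrite Tlow_swap mulrBr.
Qed.

Lemma Jcomm_traceE d : Jcomm_trace S d = \sum_c S x c c d + JSJ d.
Proof.
have JSJ_part : \sum_b \sum_c J x c b * \sum_e S x b c e * J x e d = JSJ d.
  by apply: eq_bigr => b _; apply: eq_bigr => c _; rewrite big_distrr;
    apply: eq_bigr => e _ /=; ring.
have trace_part : \sum_b \sum_c J x c b * \sum_e S x e c d * J x b e = - \sum_c S x c c d.
  rewrite exchange_big /= -sumrN; apply: eq_bigr => c _.
  transitivity (\sum_e (\sum_b J x c b * J x b e) * S x e c d).
    under eq_bigr do rewrite big_distrr /=.
    rewrite exchange_big; apply: eq_bigr => e _ /=; rewrite big_distrl.
    by apply: eq_bigr => b _ /=; ring.
  by under eq_bigr do rewrite JJ mulNr; rewrite sumrN sum_delta_mul_sym.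
rewrite /Jcomm_trace.
under eq_bigr do (under eq_bigr do rewrite mulrBr; rewrite sumrB).
by rewrite sumrB JSJ_part trace_part opprK addrC.
Qed.

Hypothesis n_neq2 : n != 2%N.

Let n2_neq0 := natr_sub2_neq0 R n_neq2.

Lemma Aform_torsion d : Aform g J (torsion S) x d = (n%:R - 2)^-1 * Jcomm_trace S d - beta d.
Proof.
have trT : \sum_a T a a d = \sum_a S x a a d - n%:R * beta d.
  by rewrite /torsion sumrB trace_conformal.
have JJT : \sum_a \sum_b \sum_c J x a c * J x b d *
     ( \sum_e \sum_f g x a e * ginv g x c f * T e f b
     - \sum_e \sum_f g x b e * T e a f * ginv g x f c
     - T c b a) = 2 * (2 * beta d + JSJ d).
  transitivity (
      \sum_a \sum_b \sum_c J x a c * J x b d * (\sum_e \sum_f g x a e * ginv g x c f * T e f b)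
    - \sum_a \sum_b \sum_c J x a c * J x b d * (\sum_e \sum_f g x b e * T e a f * ginv g x f c)
    - \sum_a \sum_b \sum_c J x a c * J x b d * T c b a).
    rewrite -!sumrB; apply: eq_bigr => a _; rewrite -!sumrB; apply: eq_bigr => b _.
    by rewrite -!sumrB; apply: eq_bigr => c _; rewrite !mulrBr.
  rewrite contract_torsion_g contract_torsion_ginv contract_Jginv_Tlow; ring.
rewrite /Aform trT JJT Jcomm_traceE.
by field.
Qed.

Lemma GT_torsion_conformal :
  (forall d, Jcomm_trace S d = 0) -> forall a b c, GT g J (torsion S) x a b c = S x a c b.
Proof.
move=> Jtr0 a b c.
have A_beta d : Aform g J (torsion S) x d = - beta d.
  by rewrite Aform_torsion Jtr0 mulr0 sub0r.
have TlowT e b' c' : Tlow g (torsion S) x e b' c' = K e b' c' - K e c' b'.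
  by rewrite /Tlow -sumrB; apply: eq_bigr => f _; rewrite /torsion mulrBr.
have GTlowK e : GTlow g J (torsion S) x e b c = K e c b.
  rewrite /GTlow !A_beta !TlowT [K c b e]Tlow_swap [K b e c]Tlow_swap [K b c e]Tlow_swap.
  by rewrite [g x c b]g_sym; field.
by rewrite raise_Tlow; apply: eq_bigr => e _; rewrite GTlowK.
Qed.

End ConformalTensor.

Section CanonicalConnection.
Variables (R : realType) (n : nat) (g J : 'rV[R]_n -> 'M[R]_n) (x : 'rV[R]_n).
Hypotheses (J2 : J x *m J x = - 1%:M) (gsym : (g x)^T = g x) (gunit : g x \in unitmx).
Hypothesis JgJ : (J x)^T *m g x *m J x = g x.
Hypothesis n_neq2 : n != 2%N.

Local Notation dg k a b := (pd (fun y => g y a b) k x).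
Hypothesis dg_sym : forall k a b, dg k a b = dg k b a.

Let g_sym := sym_mxE gsym.
Let JJ := mulJJE J2.
Let JgJE := JGJE JgJ.
Let trJ := mxtrace_cplx J2 gsym gunit JgJ.

Let n2_neq0 := natr_sub2_neq0 R n_neq2.

Let ginvT_g e b : \sum_d ginv g x d e * g x d b = (e == b)%:R.
Proof.
by rewrite -(mulVmxE gunit); apply: eq_bigr => d _; rewrite (invmx_symE gsym).
Qed.

Local Notation Nc := (Gamma_c g J).
Local Notation B := (Bform g J x).
Local Notation Bup := (Bup g J x).

Lemma LC_lower c a b : \sum_d LC g x d c a * g x d b = 2^-1 * (dg c b a + dg a b c - dg b c a).
Proof.
rewrite /LC; under eq_bigr do rewrite -mulrA big_distrl /=.
rewrite -big_distrr /= exchange_big /=; congr (_ * _).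
under eq_bigr do (under eq_bigr do rewrite mulrAC; rewrite -big_distrl /= ginvT_g).
by rewrite sum_delta_mul.
Qed.

Lemma Bup_lower b : \sum_d Bup d * g x d b = B b.
Proof.
rewrite /Defs.Bup; under eq_bigr do rewrite big_distrl /=.
rewrite exchange_big /=.
under eq_bigr do (under eq_bigr do rewrite mulrAC; rewrite -big_distrl /= ginvT_g).
by rewrite sum_delta_mul.
Qed.

Lemma Gamma_c_lower c a b : \sum_d Nc x d c a * g x d b =
  \sum_d LC g x d c a * g x d b - B c * g x a b + g x c a * B b - B a * g x c b.
Proof.
rewrite /Gamma_c; under eq_bigr do rewrite !(mulrDl, mulNr).
rewrite !big_split /= !sumrN !sum_scale_delta.
congr (_ + _ + _ + _).
by rewrite -Bup_lower big_distrr; apply: eq_bigr => d _ /=; ring.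
Qed.

Lemma covg_Gamma_c c a b : covg Nc g x c a b = 2 * B c * g x a b.
Proof.
rewrite /covg.
under [X in _ - _ - X]eq_bigr do rewrite [g x a _]g_sym.
rewrite !Gamma_c_lower !LC_lower (dg_sym c b a) (dg_sym a b c) (dg_sym b c a).
by rewrite (dg_sym b a c) (dg_sym a c b) (g_sym c a) (g_sym c b) (g_sym b a); field.
Qed.

Lemma Gamma_c_sym a b c : Nc x a b c = Nc x a c b.
Proof.
rewrite /Gamma_c /LC (g_sym b c).
have -> : \sum_d ginv g x a d * (dg b d c + dg c d b - dg d b c)
        = \sum_d ginv g x a d * (dg c d b + dg b d c - dg d c b).
  by apply: eq_bigr => d _; rewrite (dg_sym d b c); congr (_ * _); ring.
ring.
Qed.

Lemma covJ_Gamma_c c b a : covJ Nc J x c b a = covJ (LC g) J x c b a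
  + Bup b * (\sum_d g x c d * J x d a) - (b == c)%:R * (\sum_d B d * J x d a)
  - (\sum_d J x b d * Bup d) * g x c a + B a * J x b c.
Proof.
rewrite /covJ /Gamma_c.
under eq_bigr do rewrite !(mulrDl, mulNr).
under [X in _ - X]eq_bigr do rewrite !(mulrDl, mulNr).
rewrite !big_split /= !sumrN !sum_scale_delta !sum_scale_delta_sym.
have -> : \sum_i Bup b * g x c i * J x i a = Bup b * \sum_d g x c d * J x d a.
  by rewrite big_distrr; apply: eq_bigr => i _ /=; ring.
have -> : \sum_i B i * (b == c)%:R * J x i a = (b == c)%:R * \sum_d B d * J x d a.
  by rewrite big_distrr; apply: eq_bigr => i _ /=; ring.
have -> : \sum_i Bup i * g x c a * J x b i = (\sum_d J x b d * Bup d) * g x c a.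
  by rewrite big_distrl; apply: eq_bigr => i _ /=; ring.
ring.
Qed.

Lemma Jtrace_covJ_Gamma_c a : \sum_b \sum_c J x c b * covJ Nc J x c b a = 0.
Proof.
have LC_part : \sum_b \sum_c J x c b * covJ (LC g) J x c b a = (n%:R - 2) * B a.
  by rewrite /Bform mulrA mulfV // mul1r.
have Bup_part : \sum_b \sum_c J x c b * (Bup b * \sum_d g x c d * J x d a) = B a.
  rewrite -Bup_lower; apply: eq_bigr => b _.
  rewrite -JgJE big_distrr; apply: eq_bigr => c _ /=.
  by rewrite mulrCA; congr (_ * _); rewrite big_distrr; apply: eq_bigr => e _ /=; ring.
have trace_part : \sum_b \sum_c J x c b * ((b == c)%:R * \sum_d B d * J x d a) = 0.
  transitivity (\sum_b J x b b * \sum_d B d * J x d a); last first.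
    by rewrite -big_distrl /= -/(\tr (J x)) trJ mul0r.
  apply: eq_bigr => b _; rewrite -(sum_mul_delta_sym (fun c => J x c b * _) b).
  by apply: eq_bigr => c _ /=; ring.
have JBup_part : \sum_b \sum_c J x c b * ((\sum_d J x b d * Bup d) * g x c a) = - B a.
  rewrite exchange_big /= -Bup_lower -sumrN; apply: eq_bigr => c _.
  transitivity ((\sum_b J x c b * \sum_d J x b d * Bup d) * g x c a).
    by rewrite big_distrl; apply: eq_bigr => b _ /=; ring.
  rewrite -mulNr; congr (_ * _).
  under eq_bigr do rewrite big_distrr /=.
  rewrite exchange_big /=.
  under eq_bigr do (under eq_bigr do rewrite mulrA; rewrite -big_distrl /= JJ).
  by rewrite -sum_delta_mul_sym -sumrN; apply: eq_bigr => d _; rewrite mulNr.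
have JJ_part : \sum_b \sum_c J x c b * (B a * J x b c) = - (n%:R * B a).
  rewrite exchange_big /=.
  under eq_bigr do (under eq_bigr do rewrite mulrCA; rewrite -big_distrr /= JJ eqxx).
  under eq_bigr do rewrite /= mulr1n mulrN1.
  by rewrite sumrN sumr_const card_ord mulr_natl.
transitivity (\sum_b \sum_c J x c b * covJ (LC g) J x c b a
  + \sum_b \sum_c J x c b * (Bup b * \sum_d g x c d * J x d a)
  - \sum_b \sum_c J x c b * ((b == c)%:R * \sum_d B d * J x d a)
  - \sum_b \sum_c J x c b * ((\sum_d J x b d * Bup d) * g x c a)
  + \sum_b \sum_c J x c b * (B a * J x b c)).
  rewrite -big_split -sumrB -sumrB -big_split; apply: eq_bigr => b _.
  rewrite -big_split -sumrB -sumrB -big_split; apply: eq_bigr => c _.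
  by rewrite covJ_Gamma_c /=; move: (covJ (LC g) J x c b a) => L; ring.
by rewrite LC_part Bup_part trace_part JBup_part JJ_part; ring.
Qed.


Variables (Gam : Chr R n) (B' : 'I_n -> R).
Hypothesis GamJ : forall c a b, covJ Gam J x c a b = 0.
Hypothesis Gamg : forall c a b, covg Gam g x c a b = 2 * B' c * g x a b.

Definition chr_sub (G G' : Chr R n) : Chr R n := fun y a b c => G y a b c - G' y a b c.

Local Notation S := (chr_sub Gam Nc).

Lemma conformal_sub : conformal_tensor g x S (fun c => B c - B' c).
Proof.
move=> c a b; have := covg_Gamma_c c a b; have := Gamg c a b; rewrite /covg => GamE NcE.
rewrite /chr_sub /=.
under eq_bigr do rewrite mulrBl.
under [X in _ + X = _]eq_bigr do rewrite mulrBl.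
rewrite !sumrB.
set X1 := \sum_d Gam x d c a * g x d b in GamE *.
set X2 := \sum_d Gam x d c b * g x a d in GamE *.
set Y1 := \sum_d Nc x d c a * g x d b in NcE *.
set Y2 := \sum_d Nc x d c b * g x a d in NcE *.
have XE : X1 + X2 = dg c a b - 2 * B' c * g x a b by rewrite -GamE; ring.
have YE : Y1 + Y2 = dg c a b - 2 * B c * g x a b by rewrite -NcE; ring.
transitivity ((X1 + X2) - (Y1 + Y2)); first by ring.
by rewrite XE YE; ring.
Qed.

Lemma covJ_sub c a b : covJ Gam J x c a b - covJ Nc J x c a b
  = \sum_d S x a c d * J x d b - \sum_d S x d c b * J x a d.
Proof.
have E1 : \sum_d S x a c d * J x d b
         = \sum_d Gam x a c d * J x d b - \sum_d Nc x a c d * J x d b.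
  by rewrite -sumrB; apply: eq_bigr => d _; rewrite mulrBl.
have E2 : \sum_d S x d c b * J x a d
         = \sum_d Gam x d c b * J x a d - \sum_d Nc x d c b * J x a d.
  by rewrite -sumrB; apply: eq_bigr => d _; rewrite mulrBl.
by rewrite /covJ E1 E2; ring.
Qed.

Lemma Jcomm_trace_sub a : Jcomm_trace J x S a = 0.
Proof.
rewrite -(subrr (\sum_b \sum_c J x c b * covJ Nc J x c b a)).
rewrite [X in _ = X - _](_ : _ = \sum_b \sum_c J x c b * covJ Gam J x c b a); last first.
  by rewrite (Jtrace_covJ_Gamma_c a) big1 // => b _; rewrite big1 // => c _; rewrite GamJ mulr0.
rewrite -sumrB; apply: eq_bigr => b _; rewrite -sumrB; apply: eq_bigr => c _.
by rewrite -mulrBr covJ_sub.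
Qed.

Lemma GT_torsion a b c : GT g J (torsion Gam) x a b c = S x a c b.
Proof.
have torsionE : torsion Gam x = torsion S x.
  apply/funext => a'; apply/funext => b'; apply/funext => c'.
  by rewrite /torsion /chr_sub (Gamma_c_sym a' b' c'); ring.
transitivity (GT g J (fun=> torsion Gam x) x a b c) => //; rewrite torsionE.
exact: (GT_torsion_conformal J2 gsym gunit JgJ conformal_sub n_neq2 Jcomm_trace_sub).
Qed.

Lemma VT_torsion a b c :
  VT g J (torsion Gam) x a b c = 2 * \sum_e J x a e * (Gam x e c b - Gamma_gc g J x e c b).
Proof.
rewrite /VT.
under eq_bigr do rewrite GT_torsion.
under [X in _ + X]eq_bigr do rewrite GT_torsion.
have Ncov : covJ Nc J x c a b = \sum_d J x a d * S x d c b - \sum_d S x a c d * J x d b.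
  have := covJ_sub c a b; rewrite GamJ sub0r => /(congr1 -%R); rewrite opprK => ->.
  by rewrite opprB; congr (_ - _); apply: eq_bigr => d _; rewrite mulrC.
suff -> : \sum_e J x a e * (Gam x e c b - Gamma_gc g J x e c b)
        = \sum_e J x a e * S x e c b - 2^-1 * covJ Nc J x c a b.
  by rewrite Ncov; field.
rewrite /Gamma_gc /Gc.
transitivity (\sum_e (J x a e * S x e c b
      + 2^-1 * \sum_f J x a e * J x e f * covJ Nc J x c f b)).
  apply: eq_bigr => e _; rewrite /chr_sub.
  have -> : \sum_f J x a e * J x e f * covJ Nc J x c f b
          = J x a e * \sum_f J x e f * covJ Nc J x c f b.
    by rewrite big_distrr; apply: eq_bigr => f _ /=; rewrite mulrA.
  by move: (\sum_f J x e f * _) => Z; ring.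
rewrite big_split /=; congr (_ + _).
rewrite -big_distrr /= exchange_big /=.
under eq_bigr do rewrite -big_distrl /= JJ mulNr.
by rewrite sumrN sum_delta_mul_sym mulrN.
Qed.

Lemma Gamma_gc_iff_VT_torsion :
  (forall a b c, Gam x a b c = Gamma_gc g J x a b c) <->
  (forall a b c, VT g J (torsion Gam) x a b c = 0).
Proof.
split=> [eqGam a b c | VT0 a c b].
  by rewrite VT_torsion big1 ?mulr0 // => e _; rewrite eqGam subrr mulr0.
set D := fun e => Gam x e c b - Gamma_gc g J x e c b.
have JD0 a' : \sum_e J x a' e * D e = 0.
  by have /eqP := VT0 a' b c; rewrite VT_torsion mulf_eq0 pnatr_eq0 => /eqP.
have JJD : \sum_a' J x a a' * \sum_e J x a' e * D e = - D a.
  transitivity (\sum_e (\sum_a' J x a a' * J x a' e) * D e).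
    under eq_bigr do rewrite big_distrr /=.
    rewrite exchange_big /=; apply: eq_bigr => e _; rewrite big_distrl.
    by apply: eq_bigr => a' _ /=; rewrite mulrA.
  by under eq_bigr do rewrite JJ mulNr; rewrite sumrN sum_delta_mul_sym.
have /eqP : D a = 0.
  by apply/eqP; rewrite -oppr_eq0 -JJD big1 // => a' _; rewrite JD0 mulr0.
by rewrite subr_eq0 => /eqP.
Qed.

End CanonicalConnection.

Lemma posdef_unitmx (R : numFieldType) (n : nat) (G : 'M[R]_n) :
  (forall v : 'rV[R]_n, v != 0 -> 0 < (v *m G *m v^T) 0 0) -> G \in unitmx.
Proof.
move=> Gpos; rewrite unitmxE unitfE; apply/negP => /det0P [v v0 vG].
by have := Gpos v v0; rewrite vG mul0mx !mxE ltxx.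
Qed.

Lemma pd_sym_mx (R : realType) (n : nat) (U : set 'rV[R]_n) (g : 'rV[R]_n -> 'M[R]_n) :
  open U -> (forall y, U y -> (g y)^T = g y) ->
  forall x, U x -> forall k a b, pd (fun y => g y a b) k x = pd (fun y => g y b a) k x.
Proof.
move=> oU gsym x Ux k a b; apply: near_eq_derive.
apply: (filterS _ (open_nbhs_nbhs (conj oU Ux))) => y Uy /=.
exact: sym_mxE (gsym y Uy) a b.
Qed.

Local Open Scope classical_set_scope.
Theorem theorem4p12 (R : realType) (n : nat) (hn : (4 <= n)%N)
  (U : set 'rV[R]_n) (hU : open U)
  (J g : 'rV[R]_n -> 'M[R]_n) (Gam : 'rV[R]_n -> 'I_n -> 'I_n -> 'I_n -> R)
  (hJdiff : forall x, U x -> forall i j : 'I_n, differentiable (fun y => J y i j) x)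
  (hgdiff : forall x, U x -> forall i j : 'I_n, differentiable (fun y => g y i j) x)
  (hJ2 : forall x, U x -> J x *m J x = - 1%:M)
  (hgsym : forall x, U x -> (g x)^T = g x)
  (hgpos : forall x, U x -> forall v : 'rV[R]_n, v != 0 -> 0 < (v *m g x *m v^T) 0 0)
  (hJorth : forall x, U x -> (J x)^T *m g x *m J x = g x)
  (hGamJ : forall x, U x -> forall c a b : 'I_n, covJ Gam J x c a b = 0)
  (hGamconf : exists B' : 'rV[R]_n -> 'I_n -> R, forall x, U x ->
      forall c a b : 'I_n, covg Gam g x c a b = 2 * B' x c * g x a b) :
  (forall x, U x -> forall a b c : 'I_n, Gam x a b c = Gamma_gc g J x a b c)
  <->
  (forall x, U x -> forall a b c : 'I_n, VT g J (torsion Gam) x a b c = 0).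
Proof.
case: hGamconf => B' GamB'.
have n_neq2 : n != 2%N by apply: contraTneq hn => ->.
have pointwise x (Ux : U x) := Gamma_gc_iff_VT_torsion (hJ2 x Ux) (hgsym x Ux)
  (posdef_unitmx (hgpos x Ux)) (hJorth x Ux) n_neq2 (pd_sym_mx hU hgsym Ux)
  (hGamJ x Ux) (GamB' x Ux).
by split=> eqs x Ux; apply/(pointwise x Ux)/eqs.
Qed.
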